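(* Let $A$, $B$ be lattices, where $A$ is generated by a set of join prime elements and satisfies Whitman's condition (W). Let $g\colon A\to D$ and $h\colon B\to D$ be epimorphisms onto a lattice $D$. If the fiber product $\{(a,b)\in A\times B: g(a)=h(b)\}$ is a finitely generated sublattice of $A\times B$, then $h$ is lower bounded.
   Context: Whitman's condition (W): for all finite $S,T$, if $\bigwedge S\le\bigvee T$ then some $s\in S$ has $s\le\bigvee T$ or some $t\in T$ has $\bigwedge S\le t$. An element $p$ is join prime if $p\le x\vee y$ implies $p\le x$ or $p\le y$. A lattice homomorphism $h\colon B\to D$ is lower bounded if for every $d\in D$ the set $\{x\in B: h(x)\ge d\}$ is empty or has a least element. *)

From HB Require Import structures.
From mathcomp Require Import all_boot all_order.
Set Implicit Arguments. Unset Strict Implicit. Unset Printing Implicit Defensive.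
Import Order.TTheory.
Local Open Scope order_scope.

Section LatticeDefs.
Context {d : Order.disp_t} {L : latticeType d}.

Definition bigmeet (x : L) (s : seq L) : L := foldr Order.meet x s.
Definition bigjoin (x : L) (s : seq L) : L := foldr Order.join x s.

(* Whitman's condition (W), for nonempty finite S = s0::S', T = t0::T' *)
Definition whitman : Prop :=
  forall (s0 : L) (S : seq L) (t0 : L) (T : seq L),
    bigmeet s0 S <= bigjoin t0 T ->
    (exists2 s, s \in s0 :: S & s <= bigjoin t0 T) \/
    (exists2 t, t \in t0 :: T & bigmeet s0 S <= t).

Definition join_prime (p : L) : Prop :=
  forall x y : L, p <= x `|` y -> p <= x \/ p <= y.

Inductive gen (X : L -> Prop) : L -> Prop :=
  | gen_base x : X x -> gen X x
  | gen_meet x y : gen X x -> gen X y -> gen X (x `&` y)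
  | gen_join x y : gen X x -> gen X y -> gen X (x `|` y).

Definition generated_by_join_primes : Prop :=
  exists X : L -> Prop, (forall x, X x -> join_prime x) /\ (forall a, gen X a).
End LatticeDefs.

Definition lattice_hom {d1 d2} {L1 : latticeType d1} {L2 : latticeType d2}
  (f : L1 -> L2) : Prop :=
  (forall x y, f (x `&` y) = f x `&` f y) /\ (forall x y, f (x `|` y) = f x `|` f y).

(* epimorphism = surjective lattice homomorphism *)
Definition lattice_epi {d1 d2} {L1 : latticeType d1} {L2 : latticeType d2}
  (f : L1 -> L2) : Prop :=
  lattice_hom f /\ (forall y, exists x, f x = y).

Definition lower_bounded {d1 d2} {L1 : latticeType d1} {L2 : latticeType d2}
  (h : L1 -> L2) : Prop :=
  forall y : L2, (forall x : L1, ~ (y <= h x)) \/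
    (exists m : L1, y <= h m /\ forall x, y <= h x -> m <= x).

Inductive gen2 {d1 d2} {A : latticeType d1} {B : latticeType d2}
  (X : A * B -> Prop) : A * B -> Prop :=
  | gen2_base p : X p -> gen2 X p
  | gen2_meet p q : gen2 X p -> gen2 X q -> gen2 X (p.1 `&` q.1, p.2 `&` q.2)
  | gen2_join p q : gen2 X p -> gen2 X q -> gen2 X (p.1 `|` q.1, p.2 `|` q.2).

Definition fiber_product {d1 d2 d3} {A : latticeType d1} {B : latticeType d2}
  {D : latticeType d3} (g : A -> D) (h : B -> D) (p : A * B) : Prop :=
  g p.1 = h p.2.

(* the fiber product (always closed under componentwise meet/join when g,h are
   homomorphisms) is generated, as a sublattice of A x B, by finitely many of
   its elements *)
Definition fiber_product_fg {d1 d2 d3} {A : latticeType d1} {B : latticeType d2}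
  {D : latticeType d3} (g : A -> D) (h : B -> D) : Prop :=
  exists s : seq (A * B),
    (forall p, p \in s -> fiber_product g h p) /\
    (forall p, fiber_product g h p <-> gen2 (fun q => q \in s) p).

From HB Require Import structures.
From mathcomp Require Import all_boot all_order.
Import Order.TTheory.
Local Open Scope order_scope.

(* Let P be the sublattice of A x B generated by a finite set s, and call
   p in P a least lift of a in A if a <= p.1 and p.2 <= q.2 for every q in P
   with a <= q.1.  The heart of the proof is that, when A satisfies (W) and is
   generated by join primes, every a that lies below the first coordinate of
   some element of P has a least lift.  This goes by induction on how a is
   generated:
   - for a join prime a, the meet of some c in P above a with all generators
     q in s with a <= q.1 is a least lift (join primality handles joins inside P);
   - for a = a1 `&` a2, the binary form of (W) lets us combine the least lifts of
     a1 and a2, again by meeting with the relevant generators;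
   - for a = a1 `|` a2, the join of the two least lifts is one.
   All three cases use one criterion (lemma [below_up_set]) proved by
   induction on the elements of P.  For the theorem, take P to be the fiber
   product: given y = g a in D, the second coordinate of a least lift of a is
   the least x in B with y <= h x. *)

Lemma hom_mono {d1 d2} {L1 : latticeType d1} {L2 : latticeType d2}
    (f : L1 -> L2) :
  lattice_hom f -> forall x y, x <= y -> f x <= f y.
Proof.
move=> [_ fJ] x y; rewrite leEjoin => /eqP E.
by rewrite leEjoin -fJ E.
Qed.

Lemma whitman2 {d} {L : latticeType d} :
  whitman (L := L) -> forall a1 a2 x y : L, a1 `&` a2 <= x `|` y ->
  [\/ a1 <= x `|` y, a2 <= x `|` y, a1 `&` a2 <= x | a1 `&` a2 <= y].
Proof.
move=> HW a1 a2 x y le_xy.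
have := HW a2 [:: a1] y [:: x]; rewrite /bigmeet /bigjoin /=.
case=> // [[t] | [t]]; rewrite !inE => /orP [] /eqP ->.
- by constructor 2.
- by constructor 1.
- by constructor 4.
- by constructor 3.
Qed.

Section LeastLifts.
Context {dA dB : Order.disp_t} {A : latticeType dA} {B : latticeType dB}.
Variable s : seq (A * B).

Let P := gen2 (fun q => q \in s).

Definition pmeet (p q : A * B) : A * B := (p.1 `&` q.1, p.2 `&` q.2).
Definition pjoin (p q : A * B) : A * B := (p.1 `|` q.1, p.2 `|` q.2).

Definition least_lift (a : A) (p : A * B) : Prop :=
  [/\ P p, a <= p.1 & forall q, P q -> a <= q.1 -> p.2 <= q.2].

Lemma foldr_pmeet_in (c : A * B) (l : seq (A * B)) :
  (forall q, q \in l -> P q) -> P c -> P (foldr pmeet c l).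
Proof.
elim: l => [|q l IH] //= Pl Pc.
apply: gen2_meet; first by apply: Pl; rewrite inE eqxx.
by apply: IH => // r lr; apply: Pl; rewrite inE lr orbT.
Qed.

Lemma foldr_pmeet_fst (a : A) (c : A * B) (l : seq (A * B)) :
  a <= c.1 -> (forall q, q \in l -> a <= q.1) -> a <= (foldr pmeet c l).1.
Proof.
move=> ac; elim: l => [|q l IH] //= al.
by rewrite lexI al ?inE ?eqxx // IH // => r lr; rewrite al // inE lr orbT.
Qed.

Lemma foldr_pmeet_snd (c q : A * B) (l : seq (A * B)) :
  q \in c :: l -> (foldr pmeet c l).2 <= q.2.
Proof.
elim: l => [|r l IH] /=; first by rewrite inE => /eqP ->.
rewrite inE orbCA => /orP [/eqP -> | ql]; first exact: leIl.
by apply: leIxr; apply: IH.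
Qed.

Definition restrict (a : A) (c : A * B) : A * B :=
  foldr pmeet c [seq q <- s | a <= q.1].

Lemma restrict_in (a : A) (c : A * B) : P c -> P (restrict a c).
Proof.
apply: foldr_pmeet_in => q; rewrite mem_filter => /andP [_ sq].
exact: gen2_base.
Qed.

Lemma restrict_fst (a : A) (c : A * B) : a <= c.1 -> a <= (restrict a c).1.
Proof.
by move=> ac; apply: foldr_pmeet_fst => // q; rewrite mem_filter => /andP [].
Qed.

Lemma restrict_snd_gen (a : A) (c q : A * B) :
  q \in s -> a <= q.1 -> (restrict a c).2 <= q.2.
Proof.
by move=> sq aq; apply: foldr_pmeet_snd; rewrite inE mem_filter aq sq orbT.
Qed.

Lemma restrict_snd_base (a : A) (c : A * B) : (restrict a c).2 <= c.2.
Proof. by apply: foldr_pmeet_snd; rewrite inE eqxx. Qed.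

Lemma below_up_set (a : A) (b : B) :
  (forall q, q \in s -> a <= q.1 -> b <= q.2) ->
  (forall q r, P q -> P r -> a <= q.1 `|` r.1 ->
     [\/ a <= q.1, a <= r.1 | b <= q.2 `|` r.2]) ->
  forall q, P q -> a <= q.1 -> b <= q.2.
Proof.
move=> gens joins q; elim=> {q} [q sq | q r _ IHq _ IHr | q r Pq IHq Pr IHr] /=.
- exact: gens.
- by rewrite !lexI => /andP [aq ar]; rewrite IHq ?IHr.
- move=> aqr; case: (joins q r Pq Pr aqr) => [/IHq bq | /IHr bq | //].
  + exact: le_trans bq (leUl _ _).
  + exact: le_trans bq (leUr _ _).
Qed.

Lemma lift_join_prime (a : A) (c : A * B) :
  join_prime a -> P c -> a <= c.1 -> least_lift a (restrict a c).
Proof.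
move=> jp Pc ac; split; [exact: restrict_in | exact: restrict_fst |].
apply: below_up_set => [q sq aq | q r _ _ /jp [aq | ar]].
- exact: restrict_snd_gen.
- by constructor 1.
- by constructor 2.
Qed.

Lemma lift_meet (a1 a2 : A) (p1 p2 : A * B) :
  whitman (L := A) -> least_lift a1 p1 -> least_lift a2 p2 ->
  least_lift (a1 `&` a2) (restrict (a1 `&` a2) (pmeet p1 p2)).
Proof.
move=> HW [P1 a1p1 min1] [P2 a2p2 min2].
have Pc : P (pmeet p1 p2) by apply: gen2_meet.
have below_c : (restrict (a1 `&` a2) (pmeet p1 p2)).2 <= p1.2 `&` p2.2.
  exact: restrict_snd_base.
split; [exact: restrict_in | by apply: restrict_fst; rewrite leI2 |].
apply: below_up_set => [q sq aq | q r Pq Pr].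
  exact: restrict_snd_gen.
have Pqr : P (pjoin q r) by apply: gen2_join.
case/(whitman2 HW) => [a1qr | a2qr | aq | ar].
- by constructor 3; apply: le_trans below_c _; apply/leIxl/(min1 _ Pqr).
- by constructor 3; apply: le_trans below_c _; apply/leIxr/(min2 _ Pqr).
- by constructor 1.
- by constructor 2.
Qed.

Lemma lift_join (a1 a2 : A) (p1 p2 : A * B) :
  least_lift a1 p1 -> least_lift a2 p2 ->
  least_lift (a1 `|` a2) (pjoin p1 p2).
Proof.
move=> [P1 a1p1 min1] [P2 a2p2 min2].
split; [exact: gen2_join | by rewrite leU2 |].
by move=> q Pq; rewrite leUx => /andP [a1q a2q] /=; rewrite leUx min1 ?min2.
Qed.

Lemma least_lift_exists {X : A -> Prop} :
  (forall x, X x -> join_prime x) -> whitman (L := A) ->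
  (forall a, exists2 c, P c & a <= c.1) ->
  forall a, gen X a -> exists p, least_lift a p.
Proof.
move=> jpX HW above a; elim=> {a} [x Xx | a1 a2 _ [p1 lift1] _ [p2 lift2]
                                       | a1 a2 _ [p1 lift1] _ [p2 lift2]].
- have [c Pc xc] := above x.
  by exists (restrict x c); apply: lift_join_prime (jpX x Xx) Pc xc.
- by exists (restrict (a1 `&` a2) (pmeet p1 p2)); apply: lift_meet.
- by exists (pjoin p1 p2); apply: lift_join.
Qed.

End LeastLifts.

Theorem mainTheorem13 (dA dB dD : Order.disp_t)
  (A : latticeType dA) (B : latticeType dB) (D : latticeType dD)
  (g : A -> D) (h : B -> D) :
  generated_by_join_primes (L := A) ->
  whitman (L := A) ->
  lattice_epi g -> lattice_epi h ->
  fiber_product_fg g h ->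
  lower_bounded h.
Proof.
move=> [X [jpX genX]] HW [g_hom g_onto] [_ h_onto] [s [_ fiberP]] y.
(* Every a in A lifts to the fiber product, via a preimage of g a under h. *)
have above a : exists2 c, gen2 (fun q => q \in s) c & a <= c.1.
  have [b hb] := h_onto (g a).
  by exists (a, b) => //; apply/fiberP; rewrite /fiber_product hb.
(* The least lift of a preimage a of y gives the least x with y <= h x. *)
have [a ga] := g_onto y.
have [p [Pp ap minp]] := least_lift_exists s jpX HW above a (genX a).
right; exists p.2; split.
  by rewrite -ga -(proj2 (fiberP p) Pp); apply: hom_mono.
move=> x yx; have [a' ga'] := g_onto (h x).
apply: (minp (a `|` a', x)); last exact: leUl.
apply/fiberP; rewrite /fiber_product /= (proj2 g_hom) ga ga'.
by apply/eqP; rewrite -leEjoin.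
Qed.
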